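(* Let ${\rm H}>0$ and ${\rm K}>0$. If there exists a centered Gaussian process $(B(t))_{t\ge 0}$ with covariance \[ \mathbb{E}\,B(s)B(t)=2^{-{\rm K}}\Bigl(\bigl(s^{2{\rm H}}+t^{2{\rm H}}\bigr)^{{\rm K}}-|t-s|^{2{\rm H}{\rm K}}\Bigr),\qquad s,t\ge 0, \] (i.e. bifractional Brownian motion with parameters $({\rm H},{\rm K})$ exists on $\mathbb{R}_+$), then ${\rm K}\le 2$ and ${\rm H}{\rm K}\le 1$. *)

From HB Require Import structures.
From mathcomp Require Import all_boot all_order all_algebra.
From mathcomp Require Import all_classical all_reals all_analysis.
Set Implicit Arguments. Unset Strict Implicit. Unset Printing Implicit Defensive.
Import Order.TTheory GRing.Theory Num.Theory.
Local Open Scope classical_set_scope.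
Local Open Scope ring_scope.

(* The law of a centered real Gaussian variable with standard deviation s:
   the Dirac mass at 0 if s = 0 (degenerate Gaussian), N(0, s^2) otherwise. *)
Definition centered_gaussian_law {R : realType} (s : R) : set R -> \bar R :=
  if s == 0 then \d_(0:R) else normal_prob 0 s.

Definition is_centered_gaussian {d} {T : measurableType d} {R : realType}
    (P : probability T R) (X : T -> R) : Prop :=
  exists s : R, forall A : set R, measurable A ->
    P (X @^-1` A) = centered_gaussian_law s A.

Definition centered_gaussian_process {d} {T : measurableType d} {R : realType}
    (P : probability T R) (B : R -> {RV P >-> R}) : Prop :=
  forall (n : nat) (ts : 'I_n -> R) (cs : 'I_n -> R),
    (forall i, 0 <= ts i) ->
    is_centered_gaussian P (fun w => \sum_(i < n) cs i * B (ts i) w).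

Definition bifbm_cov {R : realType} (H K s t : R) : R :=
  (2 `^ (- K)) * ((s `^ (2 * H) + t `^ (2 * H)) `^ K - `|t - s| `^ (2 * H * K)).

Definition bifbm_exists (R : realType) (H K : R) : Prop :=
  exists (d : measure_display) (T : measurableType d) (P : probability T R)
         (B : R -> {RV P >-> R}),
    centered_gaussian_process B /\
    forall s t : R, 0 <= s -> 0 <= t ->
      ('E_P[B s \* B t] = (bifbm_cov H K s t)%:E)%E.

From HB Require Import structures.
From mathcomp Require Import all_boot all_order all_algebra.
From mathcomp Require Import all_classical all_reals all_analysis.
From mathcomp Require Import ring lra measurable_realfun.
Import Order.TTheory GRing.Theory Num.Theory.
Local Open Scope ring_scope.

(* The covariance of any process satisfies the Cauchy-Schwarz bound
   cov(1,t)^2 <= cov(1,1) cov(t,t) = t^(2HK); only this second-moment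
   consequence of the hypothesis is used, not Gaussianity.  For t >= 1,
   2^K cov(1,t) = (1 + t^(2H))^K - (t - 1)^(2HK), and the elementary bound
   y^q - (y - 1)^q >= y^(q-1) (q >= 1, y >= 1) makes cov(1,t) grow at least
   like t^(2H(K-1)) when K >= 1 and like t^(2HK-1) when 2HK >= 1.  Comparing
   the squares of these rates with t^(2HK) forces K <= 2 and HK <= 1. *)

Section quadratic.
Context {F : rcfType}.

Lemma quadratic_ge0_sqr_le (a b c : F) :
  (forall r, 0 <= a * r ^+ 2 + 2 * c * r + b) -> c ^+ 2 <= a * b.
Proof.
move=> q_ge0; pose p := Poly [:: b; 2 * c; a].
have := @deg_le2_poly_ge0 _ p (size_Poly _).
rewrite !coefE /= => /(_ _)/wrap[r|]; last lra.
by rewrite horner_Poly /= mul0r add0r; have := q_ge0 r; lra.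
Qed.

End quadratic.

Section power_bounds.
Context {R : realType}.

Lemma powR_sub_pred_ge (q y : R) : 1 <= q -> 1 <= y ->
  y `^ (q - 1) <= y `^ q - (y - 1) `^ q.
Proof.
move=> q_ge1 y_ge1.
have yE : y `^ q = y * y `^ (q - 1) by rewrite mulr_powRB1 //; lra.
have y1E : (y - 1) `^ q = (y - 1) * (y - 1) `^ (q - 1).
  by rewrite mulr_powRB1 //; lra.
have le_pred : (y - 1) * (y - 1) `^ (q - 1) <= (y - 1) * y `^ (q - 1).
  by rewrite ler_wpM2l ?subr_ge0 // ge0_ler_powR ?nnegrE; lra.
rewrite yE y1E; lra.
Qed.

Lemma powR_bounded_exponent_le0 (e M : R) :
  (forall y, 1 <= y -> y `^ e <= M) -> e <= 0.
Proof.
move=> bounded; rewrite leNgt; apply/negP => e_gt0.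
pose N := `|M| + 1.
have N_ge1 : 1 <= N by have := normr_ge0 M; rewrite /N; lra.
have y_ge1 : 1 <= N `^ e^-1.
  by rewrite -(powRr0 N) ler_powR // invr_ge0 ltW.
have := bounded _ y_ge1; rewrite -powRrM mulVf ?gt_eqF // powRr1; last lra.
by have := ler_norm M; rewrite /N; lra.
Qed.

Lemma powR_sub2_le_of_sqr_le (k c y q : R) : 0 < k -> 0 < y ->
  k * y `^ (q - 1) <= c -> c ^+ 2 <= y `^ q -> y `^ (q - 2) <= k ^-2.
Proof.
move=> k_gt0 y_gt0 lower sqr_le.
have yq_gt0 : 0 < y `^ q by rewrite powR_gt0.
have split_sqr : y `^ (q - 1) ^+ 2 = y `^ q * y `^ (q - 2).
  have y_neq0 : y != 0 by rewrite gt_eqF.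
  rewrite expr2 -!powRD ?y_neq0 ?implybT //.
  by congr (y `^ _); lra.
have : (k * y `^ (q - 1)) ^+ 2 <= y `^ q.
  apply: le_trans sqr_le; rewrite ler_pXn2r // nnegrE //.
  - by rewrite mulr_ge0 ?powR_ge0 ?ltW.
  - by apply: le_trans lower; rewrite mulr_ge0 ?powR_ge0 ?ltW.
rewrite exprMn split_sqr mulrCA ger_pMr // => le1.
by rewrite -(ler_pM2l (exprn_gt0 2 k_gt0)) mulfV ?expf_neq0 ?gt_eqF.
Qed.

End power_bounds.

Section second_moments.
Context {d} {T : measurableType d} {R : realType} (P : probability T R).

Lemma expectation_sqr_Lfun1 {f : T -> R} {a : R} : measurable_fun setT f ->
  ('E_P[f \* f] = a%:E)%E -> f \* f \in Lfun P 1.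
Proof.
move=> mf Ef; apply/Lfun1_integrable/integrableP; split.
  exact/measurable_EFinP/measurable_funM.
under eq_integral => x _ do rewrite /= ger0_norm -?expr2 ?sqr_ge0 // expr2.
by move: Ef; rewrite unlock => ->; exact: ltry.
Qed.

Lemma Lfun1_mul_of_sqr {f g : T -> R} :
  measurable_fun setT f -> measurable_fun setT g ->
  f \* f \in Lfun P 1 -> g \* g \in Lfun P 1 -> f \* g \in Lfun P 1.
Proof.
move=> mf mg ff gg.
have /Lfun1_integrable sum_int : (f \* f) + (g \* g) \in Lfun P 1 by rewrite rpredD.
apply/Lfun1_integrable; apply: (le_integrable measurableT _ _ sum_int).
  exact/measurable_EFinP/measurable_funM.
move=> x _; rewrite /= lee_fin.
have sum_ge0 : 0 <= f x * f x + g x * g x by rewrite addr_ge0 // -expr2 sqr_ge0.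
rewrite (ger0_norm sum_ge0).
by have [fg_ge0|fg_lt0] := lerP 0 (f x * g x); [rewrite ger0_norm | rewrite ltr0_norm]; nra.
Qed.

Lemma expectation_mul_sqr_le (f g : T -> R) (a b c : R) :
  measurable_fun setT f -> measurable_fun setT g ->
  ('E_P[f \* f] = a%:E)%E -> ('E_P[g \* g] = b%:E)%E ->
  ('E_P[f \* g] = c%:E)%E -> c ^+ 2 <= a * b.
Proof.
move=> mf mg Ef Eg Efg.
have ff := expectation_sqr_Lfun1 mf Ef.
have gg := expectation_sqr_Lfun1 mg Eg.
have fg := Lfun1_mul_of_sqr mf mg ff gg.
apply: quadratic_ge0_sqr_le => r.
have : (0 <= 'E_P[(fun w => (r * f w + g w) ^+ 2)%R])%E.
  by apply: expectation_ge0 => w; exact: sqr_ge0.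
have -> : (fun w => (r * f w + g w) ^+ 2) =
    ((r ^+ 2) \o* (f \* f)) \+ (((2 * r) \o* (f \* g)) \+ (g \* g)).
  by apply/funext => w /=; ring.
rewrite expectationD ?rpredD ?Lfun_scale // expectationD ?Lfun_scale //.
rewrite !expectationZl // Ef Eg Efg -!EFinM -!EFinD lee_fin.
by congr (0 <= _); ring.
Qed.

End second_moments.

Section bifbm_covariance.
Variables (R : realType) (H K : R).
Hypotheses (H_gt0 : 0 < H) (K_gt0 : 0 < K).

Lemma bifbm_cov_diag (t : R) : 0 <= t -> bifbm_cov H K t t = t `^ (2 * H * K).
Proof.
move=> t_ge0.
have HK2_neq0 : 2 * H * K != 0 by rewrite gt_eqF // !mulr_gt0.
rewrite /bifbm_cov subrr normr0 powR0 // subr0.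
have -> : t `^ (2 * H) + t `^ (2 * H) = 2 * t `^ (2 * H) by lra.
by rewrite powRM ?powR_ge0 // -powRrM powRN mulrA mulVf ?mul1r // gt_eqF ?powR_gt0.
Qed.

Lemma bifbm_cov1E (t : R) : 1 <= t ->
  bifbm_cov H K 1 t = 2 `^ (- K) * ((1 + t `^ (2 * H)) `^ K - (t - 1) `^ (2 * H * K)).
Proof. by move=> t_ge1; rewrite /bifbm_cov powR1 ger0_norm // subr_ge0. Qed.

Lemma bifbm_cov1_ge_pow_K (t : R) : 1 <= K -> 1 <= t ->
  2 `^ (- K) * (t `^ (2 * H)) `^ (K - 1) <= bifbm_cov H K 1 t.
Proof.
move=> K_ge1 t_ge1; rewrite bifbm_cov1E // ler_pM2l ?powR_gt0 //.
have x_ge0 := powR_ge0 t (2 * H).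
have HH_gt0 : 0 < 2 * H by rewrite mulr_gt0.
have tail_le : (t - 1) `^ (2 * H * K) <= (t `^ (2 * H)) `^ K.
  rewrite powRrM; apply: (ge0_ler_powR (ltW K_gt0)); rewrite ?nnegrE ?powR_ge0 //.
  by apply: (ge0_ler_powR (ltW HH_gt0)); rewrite ?nnegrE; lra.
have base_le : (t `^ (2 * H)) `^ (K - 1) <= (1 + t `^ (2 * H)) `^ (K - 1).
  by apply: ge0_ler_powR; rewrite ?nnegrE; lra.
have y_ge1 : 1 <= 1 + t `^ (2 * H) by lra.
have := powR_sub_pred_ge _ _ K_ge1 y_ge1.
rewrite addrAC subrr add0r; lra.
Qed.

Lemma bifbm_cov1_ge_pow_HK (t : R) : 1 <= 2 * H * K -> 1 <= t ->
  2 `^ (- K) * t `^ (2 * H * K - 1) <= bifbm_cov H K 1 t.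
Proof.
move=> HK_ge t_ge1; rewrite bifbm_cov1E // ler_pM2l ?powR_gt0 //.
have x_ge0 := powR_ge0 t (2 * H).
have head_ge : t `^ (2 * H * K) <= (1 + t `^ (2 * H)) `^ K.
  by rewrite powRrM; apply: (ge0_ler_powR (ltW K_gt0)); rewrite ?nnegrE //; lra.
have := powR_sub_pred_ge _ _ HK_ge t_ge1; lra.
Qed.

Lemma bifbm_exponents_le :
  (forall t, 1 <= t -> bifbm_cov H K 1 t ^+ 2 <= t `^ (2 * H * K)) ->
  K <= 2 /\ H * K <= 1.
Proof.
move=> sqr_le.
have two_pow_gt0 : 0 < 2 `^ (- K) :> R by rewrite powR_gt0.
split.
- have [|K_gt1] := lerP K 1; first lra.
  suff : 2 * H * (K - 2) <= 0 by rewrite pmulr_rle0 ?mulr_gt0 // subr_le0.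
  apply: (@powR_bounded_exponent_le0 _ _ ((2 `^ (- K))^-2)) => t t_ge1.
  rewrite powRrM; apply: (@powR_sub2_le_of_sqr_le _ _ (bifbm_cov H K 1 t)) => //.
  + by rewrite powR_gt0 // (lt_le_trans ltr01).
  + exact: bifbm_cov1_ge_pow_K (ltW K_gt1) t_ge1.
  + by rewrite -powRrM sqr_le.
- have [|HK_gt1] := lerP (2 * H * K) 1; first lra.
  suff : 2 * H * K - 2 <= 0 by lra.
  apply: (@powR_bounded_exponent_le0 _ _ ((2 `^ (- K))^-2)) => t t_ge1.
  apply: (@powR_sub2_le_of_sqr_le _ _ (bifbm_cov H K 1 t)) => //.
  + by rewrite (lt_le_trans ltr01).
  + exact: bifbm_cov1_ge_pow_HK (ltW HK_gt1) t_ge1.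
  + exact: sqr_le.
Qed.

End bifbm_covariance.

Lemma bifbm_cov_sqr_le {R : realType} {H K : R} (s t : R) : 0 < H -> 0 < K ->
  bifbm_exists H K -> 0 <= s -> 0 <= t ->
  bifbm_cov H K s t ^+ 2 <= s `^ (2 * H * K) * t `^ (2 * H * K).
Proof.
move=> H_gt0 K_gt0 [d [T [P [B [_ covB]]]]] s_ge0 t_ge0.
apply: (@expectation_mul_sqr_le _ _ _ P (B s) (B t)) => //.
- by rewrite covB // bifbm_cov_diag.
- by rewrite covB // bifbm_cov_diag.
- exact: covB.
Qed.

Theorem proposition3p1 (R : realType) (H K : R) :
  0 < H -> 0 < K -> bifbm_exists H K -> K <= 2 /\ H * K <= 1.
Proof.
move=> H_gt0 K_gt0 bifbm; apply: bifbm_exponents_le => // t t_ge1.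
have := bifbm_cov_sqr_le 1 t H_gt0 K_gt0 bifbm ler01 (le_trans ler01 t_ge1).
by rewrite powR1 mul1r.
Qed.
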